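(* Let $\Omega$ be a set, $q$ a set of operations on $\Omega$ and $\Pi$ a set of similarities on $\Omega$. Then: (1) For every quantifier $Q$ on $\Omega$: $Q\in\mathrm{Inv}(\mathrm{Sim}(q))$ if and only if $Q^{\upharpoonright q}$ is definable in $\mathscr L^-_{\infty\infty}(q)$. For every finitary relation $R$ on $\Omega$: $R\in\mathrm{Inv}(\mathrm{Sim}(q))$ if and only if $R$ is definable in $\mathscr L^-_{\infty\infty}(q)$. (2) $\mathrm{Sim}(\mathrm{Inv}(\Pi))$ is the smallest full monoid of similarities including $\Pi$.
   Context: A similarity on $\Omega$ is a relation $\pi\subseteq\Omega\times\Omega$ such that every $a\in\Omega$ has some $b$ with $a\pi b$, and every $b\in\Omega$ has some $a$ with $a\pi b$. For tuples $\bar a=(a_i)_{i<\alpha}$, $\bar b=(b_i)_{i<\alpha}$, $\bar a\,\pi\,\bar b$ means $a_i\pi b_i$ for all $i$. For $R,S\subseteq\Omega^k$, $R\,\pi\,S$ means: for all $\bar a,\bar b\in\Omega^k$ with $\bar a\pi\bar b$, $\bar a\in R$ iff $\bar b\in S$; for sequences, $\bar R\,\pi\,\bar S$ means $R_i\,\pi\,S_i$ for each $i$. A quantifier on $\Omega$ is a subset of $\mathcal P(\Omega^{k_1})\times\cdots\times\mathcal P(\Omega^{k_l})$ ($l,k_i$ finite); a set of operations is a set of finitary relations and quantifiers on $\Omega$. $\mathscr L^-_{\infty\infty}(q)$ is the equality-free infinitary logic (arbitrary conjunctions/disjunctions, quantification over arbitrary sequences of variables) with a predicate symbol for each relation in $q$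 and a generalized (Lindström) quantifier symbol for each quantifier in $q$, interpreted in $\Omega$: $Q\bar x_1\dots\bar x_l(\phi_1,\dots,\phi_l)$ holds iff the tuple of sets of $k_i$-tuples satisfying $\phi_i$ lies in $Q$. Define $a\sim_q b$ iff for every formula $\phi(x,\bar y)$ of $\mathscr L^-_{\infty\infty}(q)$ and every tuple $\bar c$ from $\Omega$, $\Omega,q\models\phi(a,\bar c)\iff\Omega,q\models\phi(b,\bar c)$. For a set $\Pi$ of similarities, $a\approx_\Pi b$ iff for every finite $k$ and every $\bar c\in\Omega^k$ there is $\pi\in\Pi$ with $(a,\bar c)\,\pi\,(b,\bar c)$. A relation $R\subseteq\Omega^k$ is invariant under $\pi$ (or under an equivalence relation $\sim$, viewed as a similarity) if $\bar a\pi\bar b$ implies ($\bar a\in R\iff\bar b\in R$). Given an equivalence relation $\sim$, a quantifier $Q$ is $\sim$-invariant under $\pi$ if for all $\bar R,\bar S$ of the type of $Q$ with every $R_i,S_i$ invariant under $\sim$ and $\bar R\,\pi\,\bar S$: $\bar R\in Q\iff\bar S\in Q$. $\mathrm{Inv}(\Pi)$ is the set of all relations invariant under every $\pi\in\Pi$ and all quantifiers that are $\approx_\Pi$-invariant under every $\pi\in\Pi$. $\mathrm{Sim}(q)$ is the set of similarities $\pi$ such that every relation in $q$ is invariant under $\pi$ and every quantifier in $q$ is $\sim_q$-invariant under $\pi$. For a quantifier $Q$, $Q^{\upharpoonright q}$ is the set of $(R_1,\dots,R_l)\in Q$ such that each $R_i$ is definable in $\mathscr L^-_{\infty\infty}(q)$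 with parameters from $\Omega$. A relation $R\subseteq\Omega^k$ is definable in $\mathscr L^-_{\infty\infty}(q)$ if some formula $\phi(x_1,\dots,x_k)$ defines it in $(\Omega,q)$; a set $Q'$ of tuples of relations of type $(k_1,\dots,k_l)$ is definable if there is a sentence $\phi(\bar R_1,\dots,\bar R_l)$ of $\mathscr L^-_{\infty\infty}(q)$ expanded with new predicate symbols of arities $k_i$ with $(\Omega,q,R_1,\dots,R_l)\models\phi$ iff $(R_1,\dots,R_l)\in Q'$. A set $\Pi$ of similarities is a monoid with involution if it is closed under relational composition and converses; it is full if moreover $\approx_\Pi\in\Pi$ and $\Pi$ is closed under subsimilarities (if $\pi\in\Pi$ and $\pi'\subseteq\pi$ is a similarity then $\pi'\in\Pi$). *)

From Stdlib Require Import Fin.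
Set Implicit Arguments.
Unset Strict Implicit.

Definition tup (Om : Type) (k : nat) := Fin.t k -> Om.
Definition rel (Om : Type) (k : nat) := tup Om k -> Prop.
Definition rels (Om : Type) (l : nat) (ar : Fin.t l -> nat) :=
  forall i : Fin.t l, rel Om (ar i).
Definition quant (Om : Type) (l : nat) (ar : Fin.t l -> nat) := rels Om ar -> Prop.

Inductive op (Om : Type) : Type :=
| ORel (k : nat) (R : rel Om k)
| OQuant (l : nat) (ar : Fin.t l -> nat) (Q : quant Om ar).

Definition opset (Om : Type) := op Om -> Prop.
Definition simset (Om : Type) := (Om -> Om -> Prop) -> Prop.

(* Formulas of L^-_{oo oo}(q), expanded with extra predicate symbols E of
   arities ea, with free variables in V.  No equality atom.  Quantification
   binds an arbitrary family W of variables (variables V + W). *)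
Inductive form (Om : Type) (q : opset Om) (E : Type) (ea : E -> nat) : Type -> Type :=
| FRel V (k : nat) (R : rel Om k) (h : q (ORel R)) (xs : Fin.t k -> V) : form q ea V
| FExt V (e : E) (xs : Fin.t (ea e) -> V) : form q ea V
| FNot V (phi : form q ea V) : form q ea V
| FAnd V (I : Type) (phi : I -> form q ea V) : form q ea V
| FOr V (I : Type) (phi : I -> form q ea V) : form q ea V
| FEx V (W : Type) (phi : form q ea (V + W)) : form q ea V
| FAll V (W : Type) (phi : form q ea (V + W)) : form q ea V
| FQ V (l : nat) (ar : Fin.t l -> nat) (Q : quant Om ar) (h : q (OQuant Q))
     (phi : forall i : Fin.t l, form q ea (V + Fin.t (ar i))) : form q ea V.

Definition senv (Om V W : Type) (s : V -> Om) (w : W -> Om) : V + W -> Om :=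
  fun v => match v with inl x => s x | inr y => w y end.

Fixpoint sat (Om : Type) (q : opset Om) (E : Type) (ea : E -> nat)
  (rho : forall e : E, rel Om (ea e)) (V : Type) (phi : form q ea V) {struct phi}
  : (V -> Om) -> Prop :=
  match phi in form _ _ V0 return (V0 -> Om) -> Prop with
  | @FRel _ _ _ _ _ _ R _ xs => fun s => R (fun i => s (xs i))
  | @FExt _ _ _ _ _ e xs => fun s => rho e (fun i => s (xs i))
  | @FNot _ _ _ _ _ psi => fun s => ~ sat rho psi s
  | @FAnd _ _ _ _ _ J psi => fun s => forall i : J, sat rho (psi i) s
  | @FOr _ _ _ _ _ J psi => fun s => exists i : J, sat rho (psi i) s
  | @FEx _ _ _ _ _ W psi => fun s => exists w : W -> Om, sat rho psi (senv s w)
  | @FAll _ _ _ _ _ W psi => fun s => forall w : W -> Om, sat rho psi (senv s w)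
  | @FQ _ _ _ _ _ l ar Q _ psi =>
      fun s => Q (fun i t => sat rho (psi i) (senv s t))
  end.

Definition noext (e : Empty_set) : nat := match e with end.
Definition norho (Om : Type) : forall e : Empty_set, rel Om (noext e) :=
  fun e => match e with end.
Definition fml (Om : Type) (q : opset Om) (V : Type) := form q noext V.
Definition satq (Om : Type) (q : opset Om) (V : Type) (phi : fml q V) (s : V -> Om) :=
  sat (@norho Om) phi s.

Definition simq (Om : Type) (q : opset Om) (a b : Om) : Prop :=
  forall (W : Type) (phi : fml q (unit + W)) (c : W -> Om),
    satq phi (senv (fun _ => a) c) <-> satq phi (senv (fun _ => b) c).

Definition is_sim (Om : Type) (pi : Om -> Om -> Prop) : Prop :=
  (forall a, exists b, pi a b) /\ (forall b, exists a, pi a b).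
Definition sim_set (Om : Type) (P : simset Om) : Prop :=
  forall pi, P pi -> is_sim pi.
Definition tup_rel (Om : Type) (pi : Om -> Om -> Prop) (k : nat) (a b : tup Om k) :=
  forall i, pi (a i) (b i).
Definition rel_sim (Om : Type) (pi : Om -> Om -> Prop) (k : nat) (R S : rel Om k) :=
  forall a b : tup Om k, tup_rel pi a b -> (R a <-> S b).
Definition rel_inv (Om : Type) (pi : Om -> Om -> Prop) (k : nat) (R : rel Om k) :=
  rel_sim pi R R.
Definition quant_inv (Om : Type) (eqv pi : Om -> Om -> Prop) (l : nat)
  (ar : Fin.t l -> nat) (Q : quant Om ar) : Prop :=
  forall Rs Ss : rels Om ar,
    (forall i, rel_inv eqv (Rs i)) -> (forall i, rel_inv eqv (Ss i)) ->
    (forall i, rel_sim pi (Rs i) (Ss i)) -> (Q Rs <-> Q Ss).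

Definition approx (Om : Type) (P : simset Om) (a b : Om) : Prop :=
  forall (k : nat) (c : tup Om k), exists pi, P pi /\ pi a b /\ tup_rel pi c c.

Definition Inv (Om : Type) (P : simset Om) : opset Om :=
  fun o => match o with
  | @ORel _ k R => forall pi, P pi -> rel_inv pi R
  | @OQuant _ l ar Q => forall pi, P pi -> quant_inv (approx P) pi Q
  end.

Definition Sim (Om : Type) (q : opset Om) : simset Om :=
  fun pi => is_sim pi /\
    forall o, q o -> match o with
      | @ORel _ k R => rel_inv pi R
      | @OQuant _ l ar Q => quant_inv (simq q) pi Q
      end.

Definition definable (Om : Type) (q : opset Om) (k : nat) (R : rel Om k) : Prop :=
  exists phi : fml q (Fin.t k), forall t, satq phi t <-> R t.
Definition definable_par (Om : Type) (q : opset Om) (k : nat) (R : rel Om k) : Prop :=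
  exists (W : Type) (c : W -> Om) (phi : fml q (Fin.t k + W)),
    forall t, satq phi (senv t c) <-> R t.
Definition restrictq (Om : Type) (q : opset Om) (l : nat) (ar : Fin.t l -> nat)
  (Q : quant Om ar) : quant Om ar :=
  fun Rs => Q Rs /\ forall i, definable_par q (Rs i).
(* a class Q' of relation tuples of type ar is defined by a sentence of
   L^-(q) expanded with new predicate symbols of arities ar *)
Definition qdefinable (Om : Type) (q : opset Om) (l : nat) (ar : Fin.t l -> nat)
  (Q' : quant Om ar) : Prop :=
  exists phi : form q ar Empty_set,
    forall Rs : rels Om ar, sat Rs phi (fun e => match e with end) <-> Q' Rs.

Definition compose (Om : Type) (pi sg : Om -> Om -> Prop) (a c : Om) : Prop :=
  exists b, pi a b /\ sg b c.
Definition converse (Om : Type) (pi : Om -> Om -> Prop) (a b : Om) : Prop := pi b a.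
Definition monoid_inv (Om : Type) (P : simset Om) : Prop :=
  (forall pi sg, P pi -> P sg -> P (compose pi sg)) /\
  (forall pi, P pi -> P (converse pi)).
Definition full (Om : Type) (P : simset Om) : Prop :=
  monoid_inv P /\ P (approx P) /\
  (forall pi pi', P pi -> is_sim pi' -> (forall a b, pi' a b -> pi a b) -> P pi').

From Stdlib Require Import Fin Classical ClassicalEpsilon FunctionalExtensionality PropExtensionality.
From mathcomp Require ssreflect ssrfun ssrbool eqtype boolp wochoice.

(* Formulas of L^-(q), even with extra predicate symbols interpreted by
   ~_q-invariant relations, are preserved by every similarity of Sim(q)
   [sat_Sim_invariant]; this gives the "definable implies invariant" directions.
   Conversely, since conjunctions are arbitrary, the complete L^-(q)-type of an
   assignment is expressed by one formula [type_formula].  If an assignment a is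
   onto Om and b has the type of a, the formula "for all y, OR_u tp(a,u)(x,y)"
   provides u with tp(a,u) = tp(b,a), and the graph of (a,u) |-> (b,a) is a
   similarity of Sim(q) mapping a to b [realize_type].  So a Sim(q)-invariant
   relation is the disjunction of the types of its tuples [part1_rel], and
   Q^{|q} is defined by "for some member p of Q^{|q} and some parameters w of the
   type of Om itself, each X_i is defined by p_i's formula with parameters w"
   [part1_quant].

   Sim(q) is always a full monoid [Sim_full] and Pi is contained in
   Sim(Inv Pi) [Sim_Inv_contains].  For minimality, let P' be a full monoid
   containing Pi.  A well-ordering of Om yields a rigid relation R0 invariant
   under ≈_{P'} [rigid_relation_exists]; ≈_{P'} itself and the quantifier "is the
   image of R0 under a member of P'" belong to Inv(Pi), which forces every member
   of Sim(Inv Pi) to be a subsimilarity of a member of P' [Sim_Inv_minimal]. *)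

Lemma dependent_choice {A : Type} {B : A -> Type} (P : forall x, B x -> Prop) :
  (forall x, exists y, P x y) -> exists f : forall x, B x, forall x, P x (f x).
Proof.
  intro H. exists (fun x => proj1_sig (constructive_indefinite_description _ (H x))).
  intro x. exact (proj2_sig (constructive_indefinite_description _ (H x))).
Qed.

Lemma quant_ext {Om : Type} {l : nat} {ar : Fin.t l -> nat} (Q : quant Om ar)
  (Rs Ss : rels Om ar) : (forall i t, Rs i t <-> Ss i t) -> (Q Rs <-> Q Ss).
Proof.
  intro H. replace Ss with Rs; [tauto|].
  apply functional_extensionality_dep; intro i. apply functional_extensionality; intro t.
  apply propositional_extensionality, H.
Qed.

Definition mapl {V V' W : Type} (f : V -> V') (x : V + W) : V' + W :=
  match x with inl v => inl (f v) | inr w => inr w end.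

Lemma senv_mapl {Om V V' W : Type} (f : V -> V') (s : V' -> Om) (w : W -> Om) :
  (fun x => senv s w (mapl f x)) = senv (fun v => s (f v)) w.
Proof. apply functional_extensionality; intros [x|x]; reflexivity. Qed.

Fixpoint rename {Om : Type} {q : opset Om} {E : Type} {ea : E -> nat} {V : Type}
  (phi : form q ea V) {struct phi} : forall V', (V -> V') -> form q ea V' :=
  match phi in form _ _ V0 return forall V', (V0 -> V') -> form q ea V' with
  | @FRel _ _ _ _ _ k R h xs => fun V' f => @FRel _ _ _ _ V' k R h (fun i => f (xs i))
  | @FExt _ _ _ _ _ e xs => fun V' f => @FExt _ _ _ _ V' e (fun i => f (xs i))
  | @FNot _ _ _ _ _ psi => fun V' f => FNot (rename psi _ f)
  | @FAnd _ _ _ _ _ J psi => fun V' f => FAnd (fun i : J => rename (psi i) _ f)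
  | @FOr _ _ _ _ _ J psi => fun V' f => FOr (fun i : J => rename (psi i) _ f)
  | @FEx _ _ _ _ _ W psi => fun V' f => FEx (rename psi _ (mapl (W:=W) f))
  | @FAll _ _ _ _ _ W psi => fun V' f => FAll (rename psi _ (mapl (W:=W) f))
  | @FQ _ _ _ _ _ l ar Q h psi => fun V' f => FQ h (fun i => rename (psi i) _ (mapl f))
  end.
Arguments rename {Om q E ea V} phi {V'} f.

Lemma sat_rename {Om : Type} {q : opset Om} {E : Type} {ea : E -> nat}
  (rho : forall e, rel Om (ea e)) {V : Type} (phi : form q ea V) :
  forall V' (f : V -> V') (s : V' -> Om),
  sat rho (rename phi f) s <-> sat rho phi (fun v => s (f v)).
Proof.
  induction phi; intros V' f s; simpl.
  - tauto.
  - tauto.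
  - rewrite IHphi; tauto.
  - split; intros H0 i; apply H; auto.
  - split; intros [i Hi]; exists i; apply H; auto.
  - setoid_rewrite IHphi. setoid_rewrite senv_mapl. tauto.
  - setoid_rewrite IHphi. setoid_rewrite senv_mapl. tauto.
  - apply quant_ext; intros i t. rewrite H, senv_mapl. tauto.
Qed.

Fixpoint lift {Om : Type} {q : opset Om} {E : Type} {ea : E -> nat} {V : Type}
  (phi : fml q V) {struct phi} : form q ea V :=
  match phi in form _ _ V0 return form q ea V0 with
  | @FRel _ _ _ _ V0 k R h xs => @FRel _ _ _ _ V0 k R h xs
  | @FExt _ _ _ _ _ e xs => match e with end
  | @FNot _ _ _ _ _ psi => FNot (lift psi)
  | @FAnd _ _ _ _ _ J psi => FAnd (fun i : J => lift (psi i))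
  | @FOr _ _ _ _ _ J psi => FOr (fun i : J => lift (psi i))
  | @FEx _ _ _ _ _ W psi => FEx (lift psi)
  | @FAll _ _ _ _ _ W psi => FAll (lift psi)
  | @FQ _ _ _ _ _ l ar Q h psi => FQ h (fun i => lift (psi i))
  end.

Lemma sat_lift {Om : Type} {q : opset Om} {E : Type} {ea : E -> nat}
  (rho : forall e, rel Om (ea e)) {V : Type} (phi : fml q V) :
  forall s, sat rho (lift (ea:=ea) phi) s <-> satq phi s.
Proof.
  unfold satq. induction phi; intros s; simpl.
  - tauto.
  - destruct e.
  - rewrite IHphi; tauto.
  - split; intros H0 i; apply H; auto.
  - split; intros [i Hi]; exists i; apply H; auto.
  - split; intros [w Hw]; exists w; apply IHphi; auto.
  - split; intros Hw w; apply IHphi; auto.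
  - apply quant_ext; intros i t. rewrite H. tauto.
Qed.

Definition fiff {Om : Type} {q : opset Om} {E : Type} {ea : E -> nat} {V : Type}
  (a b : form q ea V) : form q ea V :=
  FAnd (fun x : bool => if x then FOr (fun y : bool => if y then FNot a else b)
                        else FOr (fun y : bool => if y then FNot b else a)).

Lemma sat_fiff {Om : Type} {q : opset Om} {E : Type} {ea : E -> nat}
  (rho : forall e, rel Om (ea e)) {V : Type} (a b : form q ea V) s :
  sat rho (fiff a b) s <-> (sat rho a s <-> sat rho b s).
Proof.
  unfold fiff; simpl. split.
  - intro H. destruct (H true) as [[|] H1]; destruct (H false) as [[|] H2];
      simpl in H1, H2; tauto.
  - intros H [|]; simpl.
    + destruct (classic (sat rho a s)); [exists false|exists true]; simpl; tauto.
    + destruct (classic (sat rho b s)); [exists false|exists true]; simpl; tauto.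
Qed.

Section SimilarityBasics.
Context {Om : Type}.

Lemma sim_forward (pi : Om -> Om -> Prop) {W : Type} (w : W -> Om) :
  is_sim pi -> exists w', forall x, pi (w x) (w' x).
Proof.
  intros [Hl _]. destruct (choice (fun x y => pi (w x) y) (fun x => Hl (w x))) as [w' Hw'].
  exists w'. exact Hw'.
Qed.

Lemma sim_backward (pi : Om -> Om -> Prop) {W : Type} (w' : W -> Om) :
  is_sim pi -> exists w, forall x, pi (w x) (w' x).
Proof.
  intros [_ Hr]. destruct (choice (fun x y => pi y (w' x)) (fun x => Hr (w' x))) as [w Hw].
  exists w. exact Hw.
Qed.

Lemma senv_rel (pi : Om -> Om -> Prop) {V W : Type} (s s' : V -> Om) (w w' : W -> Om) :
  (forall v, pi (s v) (s' v)) -> (forall x, pi (w x) (w' x)) ->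
  forall z, pi (senv s w z) (senv s' w' z).
Proof. intros Hs Hw [v|x]; simpl; auto. Qed.

Lemma is_sim_converse (pi : Om -> Om -> Prop) : is_sim pi -> is_sim (converse pi).
Proof. intros [Hl Hr]. split; assumption. Qed.

Lemma is_sim_compose (pi sg : Om -> Om -> Prop) :
  is_sim pi -> is_sim sg -> is_sim (compose pi sg).
Proof.
  intros [Hl1 Hr1] [Hl2 Hr2]. split.
  - intro a. destruct (Hl1 a) as [b Hb]. destruct (Hl2 b) as [c Hc]. exists c, b; auto.
  - intro c. destruct (Hr2 c) as [b Hb]. destruct (Hr1 b) as [a Ha]. exists a, b; auto.
Qed.

Lemma rel_sim_converse (pi : Om -> Om -> Prop) {k : nat} (R S : rel Om k) :
  rel_sim pi R S -> rel_sim (converse pi) S R.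
Proof. intros H t t' Ht. symmetry. apply H. exact Ht. Qed.

Lemma rel_sim_compose (pi sg : Om -> Om -> Prop) {k : nat} (R S T : rel Om k) :
  rel_sim pi R S -> rel_sim sg S T -> rel_sim (compose pi sg) R T.
Proof.
  intros H1 H2 t t'' Ht. destruct (choice _ Ht) as [u Hu].
  rewrite (H1 t u (fun i => proj1 (Hu i))). exact (H2 u t'' (fun i => proj2 (Hu i))).
Qed.

End SimilarityBasics.

Definition upd {Om : Type} {k : nat} (t : tup Om k) (j : Fin.t k) (v : Om) : tup Om k :=
  fun i => if Fin.eq_dec i j then v else t i.

Definition tcons {Om : Type} {k : nat} (a : Om) (u : tup Om k) : tup Om (S k) :=
  fun i => Fin.caseS' i (fun _ => Om) a u.

Lemma tcons_eta {Om : Type} {k : nat} (t : tup Om (S k)) :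
  t = tcons (t Fin.F1) (fun i => t (Fin.FS i)).
Proof. apply functional_extensionality; intro i. pattern i; apply Fin.caseS'; reflexivity. Qed.

Lemma upd_F1 {Om : Type} {k : nat} (t : tup Om (S k)) (a : Om) :
  upd t Fin.F1 a = tcons a (fun i => t (Fin.FS i)).
Proof.
  apply functional_extensionality; intro i. pattern i; apply Fin.caseS'; unfold upd.
  - destruct (Fin.eq_dec Fin.F1 Fin.F1) as [_|n]; [reflexivity|now destruct n].
  - intro j. destruct (Fin.eq_dec (Fin.FS j) Fin.F1) as [e|_]; [discriminate e|reflexivity].
Qed.

Lemma upd_FS {Om : Type} {k : nat} (a : Om) (u : tup Om k) (j : Fin.t k) (v : Om) :
  upd (tcons a u) (Fin.FS j) v = tcons a (upd u j v).
Proof.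
  apply functional_extensionality; intro i. pattern i; apply Fin.caseS'; unfold upd.
  - destruct (Fin.eq_dec Fin.F1 (Fin.FS j)) as [e|_]; [discriminate e|reflexivity].
  - intro m. cbn. destruct (Fin.eq_dec (Fin.FS m) (Fin.FS j)) as [e|n];
      destruct (Fin.eq_dec m j) as [e'|n']; try reflexivity; exfalso.
    + apply n', Fin.FS_inj, e.
    + apply n. rewrite e'. reflexivity.
Qed.

Lemma invariant_coordinatewise {Om : Type} (E : Om -> Om -> Prop) (k : nat) :
  forall R : rel Om k,
  (forall t j v, E (t j) v -> (R t <-> R (upd t j v))) ->
  forall t t', tup_rel E t t' -> (R t <-> R t').
Proof.
  induction k as [|k IH]; intros R HR t t' Htt.
  - replace t' with t; [tauto|].
    apply functional_extensionality; intro i. exact (Fin.case0 (fun i => t i = t' i) i).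
  - rewrite (HR t Fin.F1 (t' Fin.F1) (Htt Fin.F1)), upd_F1, (tcons_eta t').
    apply (IH (fun u => R (tcons (t' Fin.F1) u))).
    + intros u j v Huv. rewrite <- upd_FS. exact (HR _ (Fin.FS j) v Huv).
    + intro i. apply Htt.
Qed.

(** * Preservation of formulas by Sim(q) *)

Section Preservation.
Context {Om : Type} (q : opset Om).

Lemma simq_refl a : simq q a a.
Proof. intros W phi c. tauto. Qed.

Lemma simq_sym a b : simq q a b -> simq q b a.
Proof. intros H W phi c. symmetry. apply H. Qed.

(* A reflexive relation lies in Sim(q) as soon as the relations of q are invariant
   under replacing one coordinate along it (quantifiers are then automatic). *)
Lemma Sim_of_reflexive (E : Om -> Om -> Prop) :
  (forall a, E a a) ->
  (forall k (R : rel Om k), q (ORel R) ->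
     forall t j v, E (t j) v -> (R t <-> R (upd t j v))) ->
  Sim q E.
Proof.
  intros Erefl Estep. split; [split; intro a; exists a; apply Erefl|].
  intros [k R|l ar Q] h.
  - intros t t'. apply invariant_coordinatewise, Estep, h.
  - intros Rs Ss _ _ HRS. apply quant_ext. intros i t. apply HRS. intro m. apply Erefl.
Qed.

(* ~_q itself belongs to Sim(q): an atomic formula with one distinguished variable
   sees the replacement of a single coordinate. *)
Lemma simq_Sim : Sim q (simq q).
Proof.
  apply Sim_of_reflexive; [apply simq_refl|].
  intros k R h t j v Hv.
  specialize (Hv (Fin.t k) (FRel noext h (fun i => if Fin.eq_dec i j then inl tt else inr i)) t).
  unfold satq in Hv; simpl in Hv.
  assert (Hupd : forall a, (fun i => senv (fun _ : unit => a) t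
                   (if Fin.eq_dec i j then inl tt else inr i)) = upd t j a).
  { intro a. apply functional_extensionality; intro i. unfold upd.
    destruct (Fin.eq_dec i j); reflexivity. }
  rewrite !Hupd in Hv. unfold upd in Hv |- *.
  replace (fun i => if Fin.eq_dec i j then t j else t i) with t in Hv; [exact Hv|].
  apply functional_extensionality; intro i. destruct (Fin.eq_dec i j); subst; reflexivity.
Qed.

Theorem sat_Sim_invariant {E : Type} {ea : E -> nat} {V : Type} (phi : form q ea V) :
  forall pi, Sim q pi -> forall rho rho' : forall e, rel Om (ea e),
  (forall e, rel_sim pi (rho e) (rho' e)) ->
  (forall e, rel_inv (simq q) (rho e)) -> (forall e, rel_inv (simq q) (rho' e)) ->
  forall s s', (forall v, pi (s v) (s' v)) -> (sat rho phi s <-> sat rho' phi s').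
Proof.
  induction phi; intros pi Hpi rho rho' Hr Hi Hi' s s' Hs; simpl.
  - apply (proj2 Hpi (ORel R) h). intro i; apply Hs.
  - apply Hr. intro i; apply Hs.
  - rewrite (IHphi pi Hpi rho rho' Hr Hi Hi' s s' Hs). tauto.
  - split; intros H0 i; specialize (H0 i); revert H0; apply (H i pi Hpi rho rho'); auto.
  - split; intros [i H0]; exists i; revert H0; apply (H i pi Hpi rho rho'); auto.
  - split.
    + intros [w Hw]. destruct (sim_forward pi w (proj1 Hpi)) as [w' Hw'].
      exists w'. revert Hw. apply (IHphi pi Hpi rho rho'), senv_rel; auto.
    + intros [w' Hw']. destruct (sim_backward pi w' (proj1 Hpi)) as [w Hw].
      exists w. revert Hw'. apply (IHphi pi Hpi rho rho'), senv_rel; auto.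
  - split.
    + intros Hw w'. destruct (sim_backward pi w' (proj1 Hpi)) as [w Hw1].
      generalize (Hw w). apply (IHphi pi Hpi rho rho'), senv_rel; auto.
    + intros Hw w. destruct (sim_forward pi w (proj1 Hpi)) as [w' Hw1].
      generalize (Hw w'). apply (IHphi pi Hpi rho rho'), senv_rel; auto.
  - (* the subformulas define ~_q-invariant relations, which are pi-similar *)
    apply (proj2 Hpi (OQuant Q) h); intros i t t' Ht.
    + apply (H i (simq q) simq_Sim rho rho); auto. apply senv_rel; auto. intro; apply simq_refl.
    + apply (H i (simq q) simq_Sim rho' rho'); auto. apply senv_rel; auto. intro; apply simq_refl.
    + apply (H i pi Hpi rho rho'); auto. apply senv_rel; auto.
Qed.

Corollary satq_Sim_invariant {V : Type} (phi : fml q V) pi :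
  Sim q pi -> forall s s', (forall v, pi (s v) (s' v)) -> (satq phi s <-> satq phi s').
Proof.
  intros Hpi s s' Hs. apply (sat_Sim_invariant phi pi Hpi); auto; intros [].
Qed.

Lemma approx_sub_simq (X : simset Om) :
  (forall k (R : rel Om k), q (ORel R) -> forall pi, X pi -> rel_inv pi R) ->
  forall a b, approx X a b -> simq q a b.
Proof.
  intros HX a b Hab.
  set (E := fun x y => x = y \/ approx X x y).
  assert (HE : Sim q E).
  { apply Sim_of_reflexive; [intro; left; reflexivity|].
    intros k R h t j v [<-|Hap].
    - unfold upd. replace (fun i => if Fin.eq_dec i j then t j else t i) with t; [tauto|].
      apply functional_extensionality; intro i. destruct (Fin.eq_dec i j); subst; reflexivity.
    - destruct (Hap k t) as [pi [Hpi [Hpv Hpt]]].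
      apply (HX k R h pi Hpi). intro i. unfold upd.
      destruct (Fin.eq_dec i j); [subst; exact Hpv|apply Hpt]. }
  intros W phi c. apply (satq_Sim_invariant phi E HE).
  apply senv_rel; [intros _; right; exact Hab|intros; left; reflexivity].
Qed.

Lemma approx_Sim_eq : approx (Sim q) = simq q.
Proof.
  apply functional_extensionality; intro a. apply functional_extensionality; intro b.
  apply propositional_extensionality. split.
  - apply approx_sub_simq. intros k R h pi Hpi. exact (proj2 Hpi (ORel R) h).
  - intros H k c. exists (simq q). split; [apply simq_Sim|]. split; [exact H|].
    intro i; apply simq_refl.
Qed.

End Preservation.

(** * Complete types *)

Section Types.
Context {Om : Type} (q : opset Om).

Definition same_type {V : Type} (s s' : V -> Om) : Prop :=
  forall phi : fml q V, satq phi s <-> satq phi s'.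

Definition definable_set {V : Type} (S : (V -> Om) -> Prop) : Prop :=
  exists phi : fml q V, forall s, satq phi s <-> S s.

Definition defining_formula {V : Type} {S : (V -> Om) -> Prop} (hS : definable_set S)
  : fml q V := proj1_sig (constructive_indefinite_description _ hS).

Lemma sat_defining_formula {V : Type} {S : (V -> Om) -> Prop} (hS : definable_set S) s :
  satq (defining_formula hS) s <-> S s.
Proof. exact (proj2_sig (constructive_indefinite_description _ hS) s). Qed.

(* The type of s0: the conjunction of all definable conditions true of s0 (indexing by
   definable sets rather than by formulas keeps the conjunction in the language). *)
Definition type_formula {V : Type} (s0 : V -> Om) : fml q V :=
  FAnd (fun S : {S : (V -> Om) -> Prop | definable_set S /\ S s0} =>
          defining_formula (let (hS, _) := proj2_sig S in hS)).

Lemma sat_type_formula {V : Type} (s0 s : V -> Om) :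
  satq (type_formula s0) s <-> same_type s s0.
Proof.
  split.
  - intros H phi. destruct (classic (satq phi s0)) as [H0|H0].
    + assert (hS : definable_set (satq phi)) by (exists phi; tauto).
      pose proof (H (exist _ _ (conj hS H0))) as H1. change (satq (defining_formula hS) s) in H1.
      apply sat_defining_formula in H1. tauto.
    + assert (hS : definable_set (fun s => ~ satq phi s)) by (exists (FNot phi); intro; reflexivity).
      pose proof (H (exist _ _ (conj hS H0))) as H1. change (satq (defining_formula hS) s) in H1.
      apply sat_defining_formula in H1. tauto.
  - intros H [S [hS HS]]. change (satq (defining_formula hS) s).
    apply (H (defining_formula hS)), sat_defining_formula, HS.
Qed.

Lemma same_type_rename {V V' : Type} (f : V -> V') (s s' : V' -> Om) :
  same_type s s' -> same_type (fun v => s (f v)) (fun v => s' (f v)).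
Proof.
  intros H phi. specialize (H (rename phi f)). unfold satq in *.
  rewrite !sat_rename in H. exact H.
Qed.

Lemma same_type_simq a b :
  same_type (senv (fun _ : unit => a) (fun x : Om => x)) (senv (fun _ => b) (fun x => x)) ->
  simq q a b.
Proof.
  intros H W phi c.
  set (f := fun z : unit + W => match z with inl u => inl u | inr w => inr (c w) end
                                : unit + Om).
  specialize (same_type_rename f _ _ H phi).
  replace (fun v => senv (fun _ => a) (fun x : Om => x) (f v)) with (senv (fun _ : unit => a) c)
    by (apply functional_extensionality; intros [u|w]; reflexivity).
  replace (fun v => senv (fun _ => b) (fun x : Om => x) (f v)) with (senv (fun _ : unit => b) c)
    by (apply functional_extensionality; intros [u|w]; reflexivity).
  tauto.
Qed.

End Types.

Section Definability.
Context {Om : Type} (q : opset Om).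

Definition definable_full {k : nat} (R : rel Om k) : Prop :=
  exists theta : fml q (Om + Fin.t k), forall t, satq theta (senv (fun x => x) t) <-> R t.

Lemma definable_par_of_params {k : nat} (R : rel Om k) (w : Om -> Om)
  (theta : fml q (Om + Fin.t k)) :
  (forall t, satq theta (senv w t) <-> R t) -> definable_par q R.
Proof.
  intro Ht. exists Om, w.
  exists (rename theta (fun z : Om + Fin.t k => match z with inl x => inr x | inr i => inl i end)).
  intro t. unfold satq. rewrite sat_rename, <- (Ht t). unfold satq.
  replace (fun v => senv t w (match v with inl x => inr x | inr i => inl i end))
    with (senv w t); [tauto|].
  apply functional_extensionality; intros [x|i]; reflexivity.
Qed.

Lemma definable_full_par {k : nat} (R : rel Om k) : definable_full R <-> definable_par q R.
Proof.
  split.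
  - intros [theta Ht]. exact (definable_par_of_params R (fun x => x) theta Ht).
  - intros [W [c [phi Hphi]]].
    exists (rename phi (fun z : Fin.t k + W => match z with inl i => inr i | inr w => inl (c w) end)).
    intro t. unfold satq. rewrite sat_rename, <- (Hphi t). unfold satq.
    replace (fun v => senv (fun x : Om => x) t
               (match v with inl i => inr i | inr w => inl (c w) end)) with (senv t c); [tauto|].
    apply functional_extensionality; intros [i|w]; reflexivity.
Qed.

Lemma definable_full_inv {k : nat} (R : rel Om k) : definable_full R -> rel_inv (simq q) R.
Proof.
  intros [theta Ht] t t' Htt. rewrite <- (Ht t), <- (Ht t').
  apply (satq_Sim_invariant q theta _ (simq_Sim q)).
  apply senv_rel; [intro; apply simq_refl|exact Htt].
Qed.

(* A ~_q-invariant relation is the disjunction, over its tuples ab, of the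
   conjunction of the types of the coordinates ab_i over all of Om. *)
Lemma inv_definable_full {k : nat} (R : rel Om k) : rel_inv (simq q) R -> definable_full R.
Proof.
  intros HR.
  set (g := fun (i : Fin.t k) (z : unit + Om) =>
              match z with inl _ => inr i | inr x => inl x end : Om + Fin.t k).
  exists (FOr (fun p : {ab : tup Om k | R ab} =>
            FAnd (fun i : Fin.t k =>
              rename (type_formula q (senv (fun _ : unit => proj1_sig p i) (fun x : Om => x))) (g i)))).
  intro t. unfold satq; simpl.
  assert (Hg : forall i, (fun v => senv (fun x : Om => x) t (g i v)) =
                         senv (fun _ : unit => t i) (fun x => x)).
  { intro i. apply functional_extensionality; intros [u|w]; reflexivity. }
  setoid_rewrite sat_rename. setoid_rewrite Hg. split.
  - intros [[ab Hab] Hp]. simpl in Hp.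
    apply (HR ab t); [|exact Hab]. intro i. apply simq_sym, same_type_simq.
    apply sat_type_formula. exact (Hp i).
  - intros Ht. exists (exist _ t Ht). intro i. apply sat_type_formula. intro phi; tauto.
Qed.

Lemma definable_par_inv {k : nat} (R : rel Om k) : definable_par q R <-> rel_inv (simq q) R.
Proof.
  rewrite <- definable_full_par. split; [apply definable_full_inv|apply inv_definable_full].
Qed.

End Definability.

(** * Realizing types by similarities *)

Section Realization.
Context {Om : Type} (q : opset Om).

Definition onto {X : Type} (c : X -> Om) : Prop := forall x, exists z, c z = x.

Definition graph {X : Type} (c d : X -> Om) (x y : Om) : Prop := exists z, x = c z /\ y = d z.

Lemma graph_preserves {X : Type} (c d : X -> Om) : same_type q c d ->
  forall V (phi : fml q V) s s', (forall v, graph c d (s v) (s' v)) ->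
  (satq phi s <-> satq phi s').
Proof.
  intros Hcd V phi s s' Hs. destruct (choice _ Hs) as [f Hf].
  replace s with (fun v => c (f v)) by (apply functional_extensionality; intro v; symmetry; apply Hf).
  replace s' with (fun v => d (f v)) by (apply functional_extensionality; intro v; symmetry; apply Hf).
  apply same_type_rename, Hcd.
Qed.

(* If moreover c and d are onto, their graph is a member of Sim(q): relations of q are
   handled by graph_preserves, and the relations fed to a quantifier are definable from
   all parameters, so the quantifier is applied to the same formulas on both sides. *)
Lemma graph_Sim {X : Type} (c d : X -> Om) :
  onto c -> onto d -> same_type q c d -> Sim q (graph c d).
Proof.
  intros Hc Hd Hcd. split.
  { split.
    - intro x. destruct (Hc x) as [z <-]. exists (d z), z. auto.
    - intro y. destruct (Hd y) as [z <-]. exists (c z), z. auto. }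
  intros [k R|l ar Q] hq.
  - intros t t' Ht. exact (graph_preserves c d Hcd _ (FRel noext hq (fun i => i)) t t' Ht).
  - intros Rs Ss HRs _ HRS.
    destruct (dependent_choice (B := fun i => fml q (Om + Fin.t (ar i)))
                (fun i theta => forall t, satq theta (senv (fun x => x) t) <-> Rs i t)
                (fun i => inv_definable_full q (Rs i) (HRs i))) as [theta Htheta].
    destruct (choice _ Hc) as [g Hg]. destruct (choice _ Hd) as [h Hh].
    assert (Ec : forall i t, satq (rename (theta i) (mapl g)) (senv c t) <-> Rs i t).
    { intros i t. unfold satq. rewrite sat_rename, senv_mapl, <- Htheta.
      replace (fun v => c (g v)) with (fun x : Om => x); [tauto|].
      apply functional_extensionality; intro x. symmetry; apply Hg. }
    assert (Ed : forall i t, satq (rename (theta i) (mapl g)) (senv d t) <-> Ss i t).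
    { intros i t. set (t0 := fun m => c (h (t m))).
      assert (Ht0 : tup_rel (graph c d) t0 t) by (intro m; exists (h (t m)); auto).
      rewrite <- (HRS i t0 t Ht0), <- Ec. symmetry. apply (graph_preserves c d Hcd).
      apply senv_rel; [intro x; exists x; auto|exact Ht0]. }
    specialize (Hcd (FQ hq (fun i => rename (theta i) (mapl g)))). unfold satq in Hcd; simpl in Hcd.
    rewrite (quant_ext Q _ Rs Ec), (quant_ext Q _ Ss Ed) in Hcd. exact Hcd.
Qed.

(* The formula "for all y, OR_u tp(a,u)(x,y)" holds
   of a, hence of b; taking y := a gives u with tp(a,u) = tp(b,a). *)
Lemma realize_type {A : Type} (a b : A -> Om) :
  onto a -> same_type q a b -> exists pi, Sim q pi /\ forall j, pi (a j) (b j).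
Proof.
  intros Ha Hab.
  set (Psi := FAll (W:=A) (FOr (fun u : A -> Om => type_formula q (V:=A + A) (senv a u)))
              : fml q A).
  assert (HPsi : satq Psi a).
  { intro y. exists y. apply sat_type_formula. intro phi; tauto. }
  apply Hab in HPsi. destruct (HPsi a) as [u Hu].
  apply sat_type_formula in Hu.
  exists (graph (senv a u) (senv b a)). split.
  - apply graph_Sim.
    + intro x. destruct (Ha x) as [j <-]. exists (inl j). reflexivity.
    + intro x. destruct (Ha x) as [j <-]. exists (inr j). reflexivity.
    + intro phi. symmetry. apply Hu.
  - intro j. exists (inl j). auto.
Qed.

End Realization.

(* R is Sim(q)-invariant iff it is the disjunction of the types of its tuples
   (existentially quantifying the parameters), i.e. iff it is definable. *)
Lemma part1_rel {Om : Type} (q : opset Om) (k : nat) (R : rel Om k) :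
  Inv (Sim q) (ORel R) <-> definable q R.
Proof.
  split.
  - intro HR.
    exists (FOr (fun p : {ab : tup Om k | R ab} =>
               FEx (W:=Om) (type_formula q (V:=Fin.t k + Om) (senv (proj1_sig p) (fun x => x))))).
    intro t. split.
    + intros [[ab Hab] [w Hw]]. apply sat_type_formula in Hw.
      destruct (realize_type q (senv ab (fun x => x)) (senv t w)) as [pi [Hpi Hpj]].
      * intro x; exists (inr x); reflexivity.
      * intro phi; symmetry; apply Hw.
      * apply (HR pi Hpi ab t); [intro i; apply (Hpj (inl i))|exact Hab].
    + intro Ht. exists (exist _ t Ht), (fun x => x). apply sat_type_formula. intro phi; tauto.
  - intros [phi Hphi] pi Hpi t t' Ht. rewrite <- (Hphi t), <- (Hphi t').
    exact (satq_Sim_invariant q phi pi Hpi t t' Ht).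
Qed.

Section QuantifierDefinability.
Context {Om : Type} (q : opset Om) {l : nat} {ar : Fin.t l -> nat} (Q : quant Om ar).

Definition members : Type := {Rs : rels Om ar | restrictq q Q Rs}.

Definition member_formula (p : members) (i : Fin.t l) : fml q (Om + Fin.t (ar i)) :=
  proj1_sig (constructive_indefinite_description _
    (proj2 (definable_full_par q (proj1_sig p i)) (proj2 (proj2_sig p) i))).

Lemma sat_member_formula (p : members) i t :
  satq (member_formula p i) (senv (fun x => x) t) <-> proj1_sig p i t.
Proof.
  exact (proj2_sig (constructive_indefinite_description _
    (proj2 (definable_full_par q (proj1_sig p i)) (proj2 (proj2_sig p) i))) t).
Qed.

Definition param_var {i : Fin.t l} (z : Om + Fin.t (ar i)) : (Empty_set + Om) + Fin.t (ar i) :=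
  match z with inl x => inl (inr x) | inr m => inr m end.

(* "For some member p and some parameters w of the type of Om itself, each X_i is
   defined by the formula of p_i with parameters w." *)
Definition restriction_sentence : form q ar Empty_set :=
  FOr (fun p : members => FEx (W:=Om) (FAnd (fun o : option (Fin.t l) =>
    match o with
    | None => lift (rename (type_formula q (V:=Om) (fun x => x)) (@inr Empty_set Om))
    | Some i => FAll (W := Fin.t (ar i))
        (fiff (FExt q (e:=i) (fun m => inr m)) (lift (rename (member_formula p i) param_var)))
    end))).

Lemma sat_restriction_sentence (Rs : rels Om ar) :
  sat Rs restriction_sentence (fun e => match e with end) <->
  exists (p : members) (w : Om -> Om), same_type q w (fun x => x) /\
    (forall i t, Rs i t <-> satq (member_formula p i) (senv w t)).
Proof.
  unfold restriction_sentence. cbn [sat].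
  assert (Etype : forall w,
    sat Rs (lift (rename (type_formula q (V:=Om) (fun x => x)) (@inr Empty_set Om)))
        (senv (fun e : Empty_set => match e with end) w) <-> same_type q w (fun x => x)).
  { intro w. rewrite sat_lift. unfold satq. rewrite sat_rename. apply sat_type_formula. }
  assert (Ecomp : forall p w i t,
    sat Rs (fiff (FExt q (e:=i) (fun m => inr m)) (lift (rename (member_formula p i) param_var)))
        (senv (senv (fun e : Empty_set => match e with end) w) t) <->
    (Rs i t <-> satq (member_formula p i) (senv w t))).
  { intros p w i t. rewrite sat_fiff, sat_lift. unfold satq. rewrite sat_rename.
    replace (fun v => senv (senv (fun e : Empty_set => match e with end) w) t (param_var v))
      with (senv w t) by (apply functional_extensionality; intros [x|m]; reflexivity).
    cbn [sat]. tauto. }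
  split.
  - intros [p [w H]]. exists p, w. split.
    + exact (proj1 (Etype w) (H None)).
    + intros i t. exact (proj1 (Ecomp p w i t) (H (Some i) t)).
  - intros [p [w [H1 H2]]]. exists p, w. intros [i|].
    + intro t. exact (proj2 (Ecomp p w i t) (H2 i t)).
    + exact (proj2 (Etype w) H1).
Qed.

End QuantifierDefinability.

(* A tuple described by the
   restriction sentence is the image of a member p under the similarity realizing the
   parameters w, hence in Q by invariance; conversely the sentence is preserved by
   Sim(q), and Sim(q)-invariant relations are exactly the definable ones. *)
Lemma part1_quant {Om : Type} (q : opset Om) (l : nat) (ar : Fin.t l -> nat)
  (Q : quant Om ar) :
  Inv (Sim q) (OQuant Q) <-> qdefinable q (restrictq q Q).
Proof.
  simpl. rewrite approx_Sim_eq. split.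
  - intro HQ. exists (restriction_sentence q Q). intro Rs. rewrite sat_restriction_sentence. split.
    + intros [p [w [Hw HRs]]].
      destruct (realize_type q (fun x => x) w) as [pi [Hpi Hpw]].
      { intro x; exists x; reflexivity. }
      { intro psi; symmetry; apply Hw. }
      assert (Hsim : forall i, rel_sim pi (proj1_sig p i) (Rs i)).
      { intros i t t' Ht. rewrite <- sat_member_formula, HRs.
        apply (satq_Sim_invariant q _ pi Hpi). apply senv_rel; assumption. }
      assert (Hdef : forall i, definable_par q (Rs i)).
      { intro i. apply (definable_par_of_params q _ w (member_formula q Q p i)).
        intro t. symmetry. apply HRs. }
      split; [|exact Hdef].
      apply (HQ pi Hpi (proj1_sig p) Rs); [| |exact Hsim|exact (proj1 (proj2_sig p))].
      * intro i. apply definable_par_inv, (proj2 (proj2_sig p)).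
      * intro i. apply definable_par_inv, Hdef.
    + intros HR. exists (exist _ Rs HR), (fun x => x). split; [intro psi; tauto|].
      intros i t. rewrite sat_member_formula. simpl. tauto.
  - intros [phi Hphi] pi Hpi Rs Ss HRs HSs HRS.
    pose proof (sat_Sim_invariant q phi pi Hpi Rs Ss HRS HRs HSs
                  (fun e => match e with end) (fun e => match e with end)
                  (fun v => match v with end)) as Hp.
    rewrite (Hphi Rs), (Hphi Ss) in Hp. unfold restrictq in Hp.
    assert (forall i, definable_par q (Rs i)) by (intro i; apply definable_par_inv, HRs).
    assert (forall i, definable_par q (Ss i)) by (intro i; apply definable_par_inv, HSs).
    tauto.
Qed.

(** * Part (2): Sim(q) is a full monoid *)

Section SimMonoid.
Context {Om : Type} (q : opset Om).

Lemma Sim_converse (pi : Om -> Om -> Prop) : Sim q pi -> Sim q (converse pi).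
Proof.
  intros [Hs Hpi]. split; [apply is_sim_converse, Hs|].
  intros [k R|l ar Q] h.
  - intros t t' Ht. symmetry. exact (Hpi (ORel R) h t' t Ht).
  - intros Rs Ss HR HS HRS. symmetry.
    apply (Hpi (OQuant Q) h Ss Rs HS HR). intro i. exact (rel_sim_converse _ _ _ (HRS i)).
Qed.

Lemma Sim_respects_simq (pi : Om -> Om -> Prop) a b a' b' :
  Sim q pi -> pi a b -> pi a' b' -> simq q a a' -> simq q b b'.
Proof.
  intros Hpi Hab Ha'b' Haa W phi c.
  destruct (sim_backward pi c (proj1 Hpi)) as [d Hd].
  rewrite <- (satq_Sim_invariant q phi pi Hpi (senv (fun _ => a) d) (senv (fun _ => b) c))
    by (apply senv_rel; auto).
  rewrite <- (satq_Sim_invariant q phi pi Hpi (senv (fun _ => a') d) (senv (fun _ => b') c))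
    by (apply senv_rel; auto).
  apply Haa.
Qed.

Corollary Sim_reflects_simq (pi : Om -> Om -> Prop) a b a' b' :
  Sim q pi -> pi a b -> pi a' b' -> simq q b b' -> simq q a a'.
Proof.
  intros Hpi Hab Ha'b'. exact (Sim_respects_simq (converse pi) b a b' a' (Sim_converse pi Hpi) Hab Ha'b').
Qed.

Definition image (pi : Om -> Om -> Prop) {k : nat} (R : rel Om k) : rel Om k :=
  fun u => exists t, tup_rel pi t u /\ R t.

Lemma image_Sim (pi : Om -> Om -> Prop) {k : nat} (R : rel Om k) :
  Sim q pi -> rel_inv (simq q) R -> rel_sim pi R (image pi R) /\ rel_inv (simq q) (image pi R).
Proof.
  intros Hpi HR. split.
  - intros t u Htu. split; [intro HRt; exists t; auto|].
    intros [t' [Ht'u HRt']]. apply (HR t' t); [|exact HRt'].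
    intro m. apply (Sim_reflects_simq pi _ (u m) _ (u m)); auto. apply simq_refl.
  - assert (Himg : forall u u', tup_rel (simq q) u u' -> image pi R u -> image pi R u').
    { intros u u' Huu [t [Htu HRt]]. destruct (sim_backward pi u' (proj1 Hpi)) as [t' Ht'].
      exists t'. split; [exact Ht'|]. apply (HR t t'); [|exact HRt].
      intro m. apply (Sim_reflects_simq pi _ (u m) _ (u' m)); auto. }
    intros u u' Huu. split; apply Himg; [exact Huu|intro m; apply simq_sym, Huu].
Qed.

Lemma rel_sim_image_compose (pi sg : Om -> Om -> Prop) {k : nat} (R S : rel Om k) :
  is_sim pi -> rel_sim (compose pi sg) R S -> rel_sim sg (image pi R) S.
Proof.
  intros Hpi H u t'' Hu. split.
  - intros [t [Ht HRt]]. rewrite <- (H t t''); [exact HRt|]. intro m. exists (u m); auto.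
  - intro HS. destruct (sim_backward pi u Hpi) as [t Ht]. exists t. split; [exact Ht|].
    rewrite (H t t''); [exact HS|]. intro m. exists (u m); auto.
Qed.

Lemma Sim_compose (p1 p2 : Om -> Om -> Prop) : Sim q p1 -> Sim q p2 -> Sim q (compose p1 p2).
Proof.
  intros H1 H2. split; [apply is_sim_compose; [apply H1|apply H2]|].
  intros [k R|l ar Q] h.
  - exact (rel_sim_compose p1 p2 R R R (proj2 H1 (ORel R) h) (proj2 H2 (ORel R) h)).
  - (* pass through the p1-image of the relations *)
    intros Rs Ss HR HS HRS.
    assert (Himg : forall i, rel_sim p1 (Rs i) (image p1 (Rs i)) /\
                             rel_inv (simq q) (image p1 (Rs i)))
      by (intro i; apply image_Sim; auto).
    rewrite (proj2 H1 (OQuant Q) h Rs (fun i => image p1 (Rs i)) HR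
               (fun i => proj2 (Himg i)) (fun i => proj1 (Himg i))).
    apply (proj2 H2 (OQuant Q) h); [intro i; apply Himg|exact HS|].
    intro i. apply rel_sim_image_compose; [apply H1|apply HRS].
Qed.

(* Subsimilarities: for ~_q-invariant relations, pi'-similarity implies pi-similarity. *)
Lemma Sim_sub (pi pi' : Om -> Om -> Prop) :
  Sim q pi -> is_sim pi' -> (forall a b, pi' a b -> pi a b) -> Sim q pi'.
Proof.
  intros Hpi Hs' Hsub. split; [exact Hs'|]. intros [k R|l ar Q] h.
  - intros t t' Ht. apply (proj2 Hpi (ORel R) h). intro i; auto.
  - intros Rs Ss HR HS HRS. apply (proj2 Hpi (OQuant Q) h); auto.
    intros i t t'' Ht. destruct (sim_backward pi' t'' Hs') as [u Hu].
    rewrite (HR i t u); [apply HRS; exact Hu|].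
    intro m. apply (Sim_reflects_simq pi _ (t'' m) _ (t'' m)); auto. apply simq_refl.
Qed.

Theorem Sim_full : full (Sim q).
Proof.
  split; [split|split].
  - apply Sim_compose.
  - apply Sim_converse.
  - rewrite approx_Sim_eq. apply simq_Sim.
  - apply Sim_sub.
Qed.

End SimMonoid.

(* Pi is contained in Sim(Inv Pi): the quantifiers of Inv(Pi) are ≈_Pi-invariant under
   Pi, and ~_{Inv Pi}-invariant relations are ≈_Pi-invariant since ≈_Pi refines
   ~_{Inv Pi}. *)
Lemma Sim_Inv_contains {Om : Type} (P : simset Om) (HP : sim_set P) pi :
  P pi -> Sim (Inv P) pi.
Proof.
  intro Hpi. split; [apply HP, Hpi|].
  assert (Happrox : forall a b, approx P a b -> simq (Inv P) a b).
  { apply approx_sub_simq. intros k R h pi0 Hpi0. exact (h pi0 Hpi0). }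
  intros [k R|l ar Q] h.
  - exact (h pi Hpi).
  - intros Rs Ss HR HS HRS. apply (h pi Hpi); auto.
    + intros i t t' Ht. apply HR. intro m. apply Happrox, Ht.
    + intros i t t' Ht. apply HS. intro m. apply Happrox, Ht.
Qed.

(** * Part (2): minimality *)

Module WellOrdering.
Import ssreflect ssrfun ssrbool eqtype boolp wochoice.

Lemma well_order_exists (T : Type) :
  exists lt : T -> T -> Prop,
    (forall x, ~ lt x x) /\ (forall x y, x = y \/ lt x y \/ lt y x) /\ well_founded lt.
Proof.
have [R woR] := well_ordering_principle (classicType T).
have Rwo : wo_chain R predT by move=> A _; apply: woR.
have Rtot := wo_chainW Rwo; have Ranti := wo_chain_antisymmetric Rwo.
exists (fun x y => R x y /\ x <> y); split; [|split].
- by move=> x [].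
- move=> x y; case: (pselect (x = y)) => [|nxy]; [by left|right].
  by case/orP: (Rtot x y isT isT) => [Rxy|Ryx]; [left|right; split=> // /esym].
- move=> a; apply: NNPP => nAa.
  have [|z [[/asboolP nAz lbz] _]] := woR [pred w | `[< ~ Acc (fun x y => R x y /\ x <> y) w >]].
    by exists a; apply/asboolP.
  apply: nAz; constructor=> y [Ryz nyz]; apply: NNPP => nAy.
  by apply: nyz; apply: Ranti => //; rewrite Ryz lbz //; apply/asboolP.
Qed.

End WellOrdering.

Section RigidRelation.
Context {T : Type} (ap : T -> T -> Prop) (ap_refl : forall x, ap x x)
  (ap_sym : forall x y, ap x y -> ap y x) (ap_trans : forall x y z, ap x y -> ap y z -> ap x z).

Lemma rigid (R0 : T -> T -> Prop)
  (R0_inv : forall x x' y y', ap x x' -> ap y y' -> R0 x y -> R0 x' y')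
  (R0_irr : forall x, ~ R0 x x) (R0_tot : forall x y, ap x y \/ R0 x y \/ R0 y x)
  (R0_wf : well_founded R0) (tau : T -> T -> Prop) (Htau : is_sim tau)
  (R0_pres : forall x y x' y', tau x y -> tau x' y' -> (R0 x x' <-> R0 y y')) :
  forall x y, tau x y -> ap x y.
Proof.
  intro x. induction x as [x IH] using (well_founded_ind R0_wf).
  intros y Hxy. destruct (R0_tot x y) as [H|[H|H]]; auto; exfalso.
  - (* R0 x y: a preimage u of x satisfies R0 u x, and IH gives ap u x *)
    destruct (proj2 Htau x) as [u Hu].
    assert (R0 u x) by (apply (R0_pres u x x y); auto).
    apply (R0_irr x). apply (R0_inv u x x x); auto.
  - (* R0 y x: IH at y gives ap y w for an image w of y, and R0 w y *)
    destruct (proj1 Htau y) as [w Hw]. pose proof (IH y H w Hw) as Hyw.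
    assert (R0 w y) by (apply (R0_pres y w x y); auto).
    apply (R0_irr y). apply (R0_inv w y y y); auto.
Qed.

(* Ordering the ap-classes by their least elements in a well-order of T. *)
Lemma rigid_relation_exists : exists R0 : T -> T -> Prop,
  (forall x x' y y', ap x x' -> ap y y' -> R0 x y -> R0 x' y') /\
  forall tau : T -> T -> Prop, is_sim tau ->
    (forall x y x' y', tau x y -> tau x' y' -> (R0 x x' <-> R0 y y')) ->
    forall x y, tau x y -> ap x y.
Proof.
  destruct (WellOrdering.well_order_exists T) as [lt [lt_irr [lt_tri lt_wf]]].
  set (R0 := fun x y => exists a, ap a x /\ forall b, ap b y -> lt a b).
  assert (R0_inv : forall x x' y y', ap x x' -> ap y y' -> R0 x y -> R0 x' y').
  { intros x x' y y' Hx Hy [a [Ha Hb]]. exists a. split; [eauto|]. intros b Hb'. apply Hb; eauto. }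
  exists R0. split; [exact R0_inv|]. apply rigid; [exact R0_inv| | |].
  - intros x [a [Ha Hb]]. exact (lt_irr a (Hb a Ha)).
  - (* compare x and y through the least element z of their two classes *)
    intros x y. destruct (classic (ap x y)) as [|Hn]; [left; auto|right].
    assert (Hmin : exists z, (ap z x \/ ap z y) /\ forall y', (ap y' x \/ ap y' y) -> ~ lt y' z).
    { apply NNPP. intro Hno. apply (well_founded_ind lt_wf (fun z => ~ (ap z x \/ ap z y)))
        with x; [|left; apply ap_refl].
      intros z IH Hz. apply Hno. exists z. split; [exact Hz|]. intros y' Hy' Hlt. exact (IH y' Hlt Hy'). }
    destruct Hmin as [z [Hz Hzm]].
    assert (Hleast : forall b, (ap b x \/ ap b y) -> ap z b \/ lt z b).
    { intros b Hb. destruct (lt_tri z b) as [<-|[H|H]]; auto. exfalso; exact (Hzm b Hb H). }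
    destruct Hz as [Hz|Hz]; [left|right]; exists z; split; auto; intros b Hb.
    + destruct (Hleast b (or_intror Hb)) as [Hzb|Hlt]; [exfalso; apply Hn; eauto|exact Hlt].
    + destruct (Hleast b (or_introl Hb)) as [Hzb|Hlt]; [exfalso; apply Hn; eauto|exact Hlt].
  - (* an R0-descending step strictly decreases the least element of the class *)
    assert (Hacc : forall a x, ap a x -> Acc R0 x).
    { intro a. induction a as [a IH] using (well_founded_ind lt_wf).
      intros x Hax. constructor. intros u [a' [Ha' Hb]]. apply (IH a'); auto. }
    intro x. apply (Hacc x x), ap_refl.
Qed.

End RigidRelation.

Definition tup2 {X : Type} (x y : X) : Fin.t 2 -> X :=
  fun i => Fin.caseS' i (fun _ => X) x (fun _ => y).

Definition brel {Om : Type} (B : Om -> Om -> Prop) : rel Om 2 :=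
  fun t => B (t Fin.F1) (t (Fin.FS Fin.F1)).

Lemma tup_rel2 {Om : Type} (pi : Om -> Om -> Prop) x x' y y' :
  pi x y -> pi x' y' -> tup_rel pi (tup2 x x') (tup2 y y').
Proof. intros H1 H2 i. pattern i; apply Fin.caseS'; auto. Qed.

Section Minimality.
Context {Om : Type} (P P' : simset Om) (HP' : sim_set P')
  (Hcomp : forall pi sg, P' pi -> P' sg -> P' (compose pi sg))
  (Hconv : forall pi, P' pi -> P' (converse pi))
  (Happrox : P' (approx P'))
  (HPP' : forall pi, P pi -> P' pi).

Lemma approx_refl a : approx P' a a.
Proof.
  intros k c. exists (compose (approx P') (converse (approx P'))).
  destruct (HP' _ Happrox) as [Hl _]. split; [apply Hcomp, Hconv; exact Happrox|]. split.
  - destruct (Hl a) as [b Hb]. exists b; split; assumption.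
  - intro i. destruct (Hl (c i)) as [b Hb]. exists b; split; assumption.
Qed.

Lemma approx_sym a b : approx P' a b -> approx P' b a.
Proof.
  intros H k c. destruct (H k c) as [s [Hs [H1 H2]]]. exists (converse s).
  split; [apply Hconv; exact Hs|]. split; [exact H1|]. intro i; apply H2.
Qed.

Lemma approx_trans a b d : approx P' a b -> approx P' b d -> approx P' a d.
Proof.
  intros H1 H2 k c. destruct (H1 k c) as [s1 [Hs1 [H11 H12]]].
  destruct (H2 k c) as [s2 [Hs2 [H21 H22]]]. exists (compose s1 s2).
  split; [apply Hcomp; assumption|]. split; [exists b; auto|]. intro i; exists (c i); auto.
Qed.

Lemma approx_transport s a1 b1 a2 b2 :
  P' s -> s a1 b1 -> s a2 b2 -> approx P' a1 a2 -> approx P' b1 b2.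
Proof.
  intros Hs H1 H2 H12 k c. destruct (sim_backward s c (HP' s Hs)) as [d Hd].
  destruct (H12 k d) as [tau [Htau [Ht1 Ht2]]].
  exists (compose (converse s) (compose tau s)).
  split; [apply Hcomp; [apply Hconv; exact Hs|apply Hcomp; assumption]|]. split.
  - exists a1. split; [exact H1|]. exists a2; auto.
  - intro i. exists (d i). split; [apply Hd|]. exists (d i); auto.
Qed.

Lemma approx_in_Inv : Inv P (ORel (brel (approx P'))).
Proof.
  intros p Hp t t' Ht. unfold brel. split.
  - apply (approx_transport p); [apply HPP', Hp|apply Ht|apply Ht].
  - apply (approx_transport (converse p)); [apply Hconv, HPP', Hp|apply Ht|apply Ht].
Qed.

Lemma simq_Inv_sub_approx a b : simq (Inv P) a b -> approx P' a b.
Proof.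
  intro H. apply approx_sym.
  specialize (H unit (FRel noext approx_in_Inv (tup2 (inl tt) (inr tt))) (fun _ => a)).
  apply H, approx_refl.
Qed.

Definition image_quantifier {k : nat} (R0 : rel Om k) : quant Om (fun _ : Fin.t 1 => k) :=
  fun Rs => exists s, P' s /\ rel_sim s R0 (Rs Fin.F1).

Lemma image_quantifier_Inv {k : nat} (R0 : rel Om k) : Inv P (OQuant (image_quantifier R0)).
Proof.
  intros p Hp Rs Ss _ _ HRS. split.
  - intros [s [Hs HR0]]. exists (compose s p). split; [apply Hcomp; auto|].
    exact (rel_sim_compose s p _ _ _ HR0 (HRS Fin.F1)).
  - intros [s [Hs HR0]]. exists (compose s (converse p)).
    split; [apply Hcomp; [exact Hs|apply Hconv, HPP', Hp]|].
    exact (rel_sim_compose s (converse p) _ _ _ HR0 (rel_sim_converse p _ _ (HRS Fin.F1))).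
Qed.

(* With R0 rigid for ≈_{P'}, the quantifier
   image_quantifier R0 holds of R0 (via ≈_{P'} itself) and is preserved by pi, so the
   pi-image of R0 is also s(R0) for some s in P'.  Then s o pi^-1 preserves R0, hence
   lies within ≈_{P'}, and pi is a subsimilarity of ≈_{P'} o s. *)
Theorem Sim_Inv_minimal
  (Hsub : forall pi pi', P' pi -> is_sim pi' -> (forall a b, pi' a b -> pi a b) -> P' pi')
  pi : Sim (Inv P) pi -> P' pi.
Proof.
  intro Hpi.
  destruct (rigid_relation_exists (approx P') approx_refl approx_sym approx_trans)
    as [R0 [R0_inv R0_rigid]].
  assert (HR0 : rel_inv (simq (Inv P)) (brel R0)).
  { intros t t' Ht. assert (Hap : forall i, approx P' (t i) (t' i))
      by (intro i; apply simq_Inv_sub_approx, Ht).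
    split; apply R0_inv; auto using approx_sym. }
  destruct (image_Sim (Inv P) pi (brel R0) Hpi HR0) as [HS HSinv].
  assert (HQ : image_quantifier (brel R0) (fun _ => image pi (brel R0))).
  { refine (proj1 (proj2 Hpi (OQuant (image_quantifier (brel R0))) (image_quantifier_Inv _)
                     (fun _ => brel R0) _ (fun _ => HR0) (fun _ => HSinv) (fun _ => HS)) _).
    exists (approx P'). split; [exact Happrox|].
    intros t t' Ht. split; apply R0_inv; auto using approx_sym. }
  destruct HQ as [s [Hs HsS]].
  assert (Htau : forall x y, compose s (converse pi) x y -> approx P' x y).
  { apply R0_rigid.
    - apply is_sim_compose; [apply HP', Hs|apply is_sim_converse, Hpi].
    - intros x y x' y' Hxy Hx'y'.
      exact (rel_sim_compose s (converse pi) _ _ _ HsS (rel_sim_converse pi _ _ HS)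
               (tup2 x x') (tup2 y y') (tup_rel2 _ _ _ _ _ Hxy Hx'y')). }
  apply (Hsub (compose (approx P') s)); [apply Hcomp; assumption|apply Hpi|].
  intros a b Hab. destruct (proj2 (HP' s Hs) b) as [x Hx]. exists x. split; [|exact Hx].
  apply approx_sym, Htau. exists b. split; assumption.
Qed.

End Minimality.

Theorem theorem10 (Om : Type) (q : opset Om) (P : simset Om) (HP : sim_set P) :
  ((forall (l : nat) (ar : Fin.t l -> nat) (Q : quant Om ar),
      Inv (Sim q) (OQuant Q) <-> qdefinable q (restrictq q Q)) /\
   (forall (k : nat) (R : rel Om k),
      Inv (Sim q) (ORel R) <-> definable q R)) /\
  (sim_set (Sim (Inv P)) /\ full (Sim (Inv P)) /\
   (forall pi, P pi -> Sim (Inv P) pi) /\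
   (forall P' : simset Om, sim_set P' -> full P' -> (forall pi, P pi -> P' pi) ->
      forall pi, Sim (Inv P) pi -> P' pi)).
Proof.
  split; [split|split; [|split; [|split]]].
  - apply part1_quant.
  - apply part1_rel.
  - intros pi [Hpi _]. exact Hpi.
  - apply Sim_full.
  - apply Sim_Inv_contains, HP.
  - intros P' HP' [[Hcomp Hconv] [Happrox Hsub]] HPP'.
    exact (Sim_Inv_minimal P P' HP' Hcomp Hconv Happrox HPP' Hsub).
Qed.
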